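(* Let $(H,+,\circ)$ be a commutative multiplicative hyperring with identity and let $P_1,\dots,P_n$ be prime strong $\mathcal{C}$-hyperideals of $H$ such that the intersection of any $n-1$ of the $P_i$'s is not equal to $P_1\cap\cdots\cap P_n$. Then $P_1\cap\cdots\cap P_n$ is an sdf-absorbing hyperideal of $H$ if and only if there is at most one $1\leq i\leq n$ such that $H/P_i$ is not of characteristic $2$.
   Context: A commutative multiplicative hyperring $(H,+,\circ)$ consists of an abelian group $(H,+)$ and an associative, commutative hyperoperation $\circ: H\times H\to P^*(H)$ with $x\circ(y+z)\subseteq x\circ y+x\circ z$ and $x\circ(-y)=-(x\circ y)=(-x)\circ y$. For subsets $A,B$, $A\circ B=\bigcup_{a\in A,b\in B}a\circ b$, $A\pm B=\{a\pm b\}$; $x^2=x\circ x$. Identity: $x\in x\circ 1$ for all $x$. A hyperideal is a nonempty $P$ with $x-y\in P$ and $r\circ x\subseteq P$ for $x,y\in P$, $r\in H$; it is prime if proper and $x\circ y\subseteq P$ implies $x\in P$ or $y\in P$. $H/P=\{x+P\}$ with coset addition and $(x+P)*(y+P)=\{z+P: z\in x\circ y\}$; characteristic $\alpha$ means $\alpha$ is the least positive integer with $\alpha u=0$ for all $u$. Let $\mathcal{C}=\{c_1\circ\cdots\circ c_n: c_i\in H\}$ and $\mathfrak{C}=\{\sum_{i=1}^m C_i: C_i\in\mathcal{C}\}$; $P$ is a strong $\mathcal{C}$-hyperideal if for every $D\in\mathfrak{C}$, $D\cap P\neq\varnothing$ implies $D\subseteq P$. A proper hyperideal $P$ is sdf-absorbing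 if whenever $0\neq x,y\in H$ and $x^2-y^2\subseteq P$, then $x-y\in P$ or $x+y\in P$. *)

From HB Require Import structures.
From mathcomp Require Import all_boot all_algebra.
Set Implicit Arguments. Unset Strict Implicit. Unset Printing Implicit Defensive.
Import GRing.Theory.
Local Open Scope ring_scope.

Section Hyperring.
Variable H : zmodType.

(* a hyperoperation: [hm x y z] means z \in x o y *)
Definition hyperop := H -> H -> H -> Prop.

Definition hset := H -> Prop.
Definition hset1 (c : H) : hset := fun z => z = c.
Definition hsub_set (A B : hset) : Prop := forall z, A z -> B z.
Definition hset_eq (A B : hset) : Prop := forall z, A z <-> B z.

Definition setmul (hm : hyperop) (A B : hset) : hset :=
  fun z => exists a b, A a /\ B b /\ hm a b z.
Definition setadd (A B : hset) : hset := fun z => exists a b, A a /\ B b /\ z = a + b.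
Definition setsub (A B : hset) : hset := fun z => exists a b, A a /\ B b /\ z = a - b.
Definition setopp (A : hset) : hset := fun z => exists a, A a /\ z = - a.

Record cm_hyperring (hm : hyperop) : Prop := {
  hm_nonempty : forall x y, exists z, hm x y z;
  hm_assoc : forall x y z,
     hset_eq (setmul hm (hm x y) (hset1 z)) (setmul hm (hset1 x) (hm y z));
  hm_comm : forall x y, hset_eq (hm x y) (hm y x);
  hm_distr : forall x y z, hsub_set (hm x (y + z)) (setadd (hm x y) (hm x z));
  hm_oppr : forall x y, hset_eq (hm x (- y)) (setopp (hm x y));
  hm_oppl : forall x y, hset_eq (hm (- x) y) (setopp (hm x y))
}.

Definition hm_identity (hm : hyperop) (e : H) : Prop := forall x, hm x e x.

Definition hyperideal (hm : hyperop) (P : hset) : Prop :=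
  (exists x, P x) /\
  (forall x y, P x -> P y -> P (x - y)) /\
  (forall r x, P x -> hsub_set (hm r x) P).

Definition proper (P : hset) : Prop := exists x, ~ P x.

Definition prime_hyperideal (hm : hyperop) (P : hset) : Prop :=
  hyperideal hm P /\ proper P /\
  (forall x y, hsub_set (hm x y) P -> P x \/ P y).

Definition hprod (hm : hyperop) (c : H) (cs : seq H) : hset :=
  foldl (fun A d => setmul hm A (hset1 d)) (hset1 c) cs.

(* C_1 + ... + C_m, each C_i = hprod of a nonempty list, m >= 1 *)
Definition Csum (hm : hyperop) (C0 : H * seq H) (Cs : seq (H * seq H)) : hset :=
  foldl (fun A p => setadd A (hprod hm p.1 p.2)) (hprod hm C0.1 C0.2) Cs.

Definition strong_C_hyperideal (hm : hyperop) (P : hset) : Prop :=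
  hyperideal hm P /\
  (forall C0 Cs, (exists z, Csum hm C0 Cs z /\ P z) ->
                 hsub_set (Csum hm C0 Cs) P).

Definition sq_diff (hm : hyperop) (x y : H) : hset := setsub (hm x x) (hm y y).

Definition sdf_absorbing (hm : hyperop) (P : hset) : Prop :=
  hyperideal hm P /\ proper P /\
  (forall x y, x <> 0 -> y <> 0 -> hsub_set (sq_diff hm x y) P ->
     P (x - y) \/ P (x + y)).

(* H/P has characteristic a : a is the least positive integer with a u = 0
   for every u = x + P of H/P, i.e. a x \in P for all x *)
Definition quot_char (P : hset) (a : nat) : Prop :=
  (0 < a)%N /\ (forall x : H, P (x *+ a)) /\
  (forall b : nat, (0 < b)%N -> (forall x : H, P (x *+ b)) -> (a <= b)%N).

Definition hcap n (P : 'I_n -> hset) : hset := fun x => forall i, P i x.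
Definition hcap_but n (P : 'I_n -> hset) (j : 'I_n) : hset :=
  fun x => forall i, i != j -> P i x.

End Hyperring.

From Pilot Require Import Defs.
From mathcomp Require Import all_boot all_algebra.
From Stdlib Require Import Classical.
Set Implicit Arguments. Unset Strict Implicit. Unset Printing Implicit Defensive.
Import GRing.Theory.

(* For a prime strong C-hyperideal P one has x^2 - y^2 ⊆ P iff x - y ∈ P or
   x + y ∈ P, so the intersection is sdf-absorbing iff one sign can be chosen
   uniformly over all components.  If H/P_k has characteristic 2 then
   x - y ∈ P_k iff x + y ∈ P_k, so only a component of other characteristic
   imposes a choice, and one such component is harmless.  Given two of them,
   P_i and P_j, irredundancy yields α ∈ ⋂_{k≠i} P_k and β ∈ ⋂_{k≠j} P_k with
   2α ∉ P_i and 2β ∉ P_j; then x = α + β, y = α - β have x - y = 2β and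
   x + y = 2α, and neither lies in the intersection. *)

Section Hyperring.
Local Open Scope ring_scope.
Variables (H : zmodType) (hm : hyperop H).

Section Hyperideal.
Variable P : hset H.
Hypothesis idealP : hyperideal hm P.

Lemma hyperideal0 : P 0.
Proof. by case: idealP => [[x Px] [subP _]]; rewrite -(subrr x); apply: subP. Qed.

Lemma hyperidealB x y : P x -> P y -> P (x - y).
Proof. by case: idealP => _ [subP _]; apply: subP. Qed.

Lemma hyperidealN x : P x -> P (- x).
Proof.
by move=> Px; rewrite -sub0r; apply: hyperidealB => //; apply: hyperideal0.
Qed.

Lemma hyperidealD x y : P x -> P y -> P (x + y).
Proof.
by move=> Px Py; rewrite -[y]opprK; apply: hyperidealB => //; apply: hyperidealN.
Qed.

Lemma hyperidealM r x z : P x -> hm r x z -> P z.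
Proof. by case: idealP => _ [_ mulP] Px; apply: mulP. Qed.

End Hyperideal.

Lemma hyperideal_of_strongC P : strong_C_hyperideal hm P -> hyperideal hm P.
Proof. by case. Qed.

Lemma hyperideal_of_prime P : prime_hyperideal hm P -> hyperideal hm P.
Proof. by case. Qed.

Lemma hprod1 c d z : hprod hm c [:: d] z <-> hm c d z.
Proof.
rewrite /hprod /= /setmul /hset1; split; first by case=> _ [_ [-> [->]]].
by move=> cdz; exists c, d.
Qed.

Section StrongC.
Variable P : hset H.
Hypothesis strongP : strong_C_hyperideal hm P.

Lemma strongC_sum2 c1 d1 c2 d2 a0 b0 a b :
  hm c1 d1 a0 -> hm c2 d2 b0 -> P (a0 + b0) ->
  hm c1 d1 a -> hm c2 d2 b -> P (a + b).
Proof.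
case: strongP => _ closedP h1 h2 Psum0 h1' h2'.
apply: (closedP (c1, [:: d1]) [:: (c2, [:: d2])]).
  by exists (a0 + b0); split => //; exists a0, b0; rewrite !hprod1.
by exists a, b; rewrite !hprod1.
Qed.

Lemma strongC_sum4 c1 d1 c2 d2 c3 d3 c4 d4 a0 b0 e0 f0 a b e f :
  hm c1 d1 a0 -> hm c2 d2 b0 -> hm c3 d3 e0 -> hm c4 d4 f0 ->
  P (a0 + b0 + e0 + f0) ->
  hm c1 d1 a -> hm c2 d2 b -> hm c3 d3 e -> hm c4 d4 f -> P (a + b + e + f).
Proof.
case: strongP => _ closedP h1 h2 h3 h4 Psum0 h1' h2' h3' h4'.
have sum4 a' b' e' f' : hm c1 d1 a' -> hm c2 d2 b' -> hm c3 d3 e' ->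
    hm c4 d4 f' ->
    Csum hm (c1, [:: d1]) [:: (c2, [:: d2]); (c3, [:: d3]); (c4, [:: d4])]
      (a' + b' + e' + f').
  move=> ha hb he hf; exists (a' + b' + e'), f'; rewrite hprod1; split=> //.
  exists (a' + b'), e'; rewrite hprod1; split=> //.
  by exists a', b'; rewrite !hprod1.
apply: closedP; last exact: sum4.
by exists (a0 + b0 + e0 + f0); split=> //; apply: sum4.
Qed.

End StrongC.

Hypothesis hmR : cm_hyperring hm.

Lemma hm_sym x y z : hm x y z -> hm y x z.
Proof. exact: (hm_comm hmR x y z).1. Qed.

Lemma hmNl x y z : hm x y z -> hm (- x) y (- z).
Proof. by move=> xyz; apply: (hm_oppl hmR x y (- z)).2; exists z. Qed.

Lemma hmNr_opp x y z : hm x (- y) z -> exists2 c, hm x y c & z = - c.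
Proof. by move=> /(hm_oppr hmR x y z).1 [c []]; exists c. Qed.

Lemma hmNN x y z : hm x y z -> hm (- x) (- y) z.
Proof.
move=> xyz; apply: (hm_oppl hmR x (- y) z).2; exists (- z).
by rewrite opprK; split=> //; apply: (hm_oppr hmR x y (- z)).2; exists z.
Qed.

Lemma hyperidealMl P r x z : hyperideal hm P -> P x -> hm x r z -> P z.
Proof. move=> idealP Px /hm_sym rxz; exact: (hyperidealM idealP Px rxz). Qed.

Lemma hm_subD_expand x y z : hm (x - y) (x + y) z ->
  exists a c c' d, [/\ hm x x a, hm x y c, hm y x c', hm y y d
                     & z = a - c + c' - d].
Proof.
move=> /(hm_distr hmR) [p [q [/hm_sym p_xxy [/hm_sym q_yxy ->]]]].
have [a [b [xxa [/hmNr_opp [c xyc ->] ->]]]] := hm_distr hmR p_xxy.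
have [c' [e [yxc [/hmNr_opp [d yyd ->] ->]]]] := hm_distr hmR q_yxy.
by exists a, c, c', d; split=> //; rewrite addrA.
Qed.

Lemma sq_diff_sub_prime P x y :
  prime_hyperideal hm P -> strong_C_hyperideal hm P ->
  hsub_set (sq_diff hm x y) P -> P (x - y) \/ P (x + y).
Proof.
move=> [_ [_ primeP]] strongP sqP; apply: primeP => z.
case/hm_subD_expand=> [a [c [c' [d [xxa xyc yxc yyd ->]]]]].
have [a0 xxa0] := hm_nonempty hmR x x.
have [c0 xyc0] := hm_nonempty hmR x y.
have [d0 yyd0] := hm_nonempty hmR y y.
apply: (strongC_sum4 strongP xxa0 (hmNl xyc0) (hm_sym xyc0) (hmNl yyd0) _
          xxa (hmNl xyc) yxc (hmNl yyd)).
by rewrite subrK; apply: sqP; exists a0, d0.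
Qed.

(* Split x o x along x = y + (x - y) into x o y + x o (x - y), then the x o y
   term, read as y o x, into y o y + y o (x - y). *)
Lemma sq_diff_meet P x y : hyperideal hm P -> P (x - y) ->
  exists a d, [/\ hm x x a, hm y y d & P (a - d)].
Proof.
move=> idealP Pxy; have [a xxa] := hm_nonempty hmR x x.
have xyx_a : hm x (y + (x - y)) a by rewrite addrC subrK.
have [c [q [xyc [xxyq ac]]]] := hm_distr hmR xyx_a.
have yyx_c : hm y (y + (x - y)) c by rewrite addrC subrK; apply: hm_sym.
have [d [q' [yyd [yxyq' cd]]]] := hm_distr hmR yyx_c.
exists a, d; split=> //; rewrite ac cd addrAC (addrC d q') addrK.
apply: (hyperidealD idealP).
  exact: (hyperidealM idealP Pxy yxyq').
exact: (hyperidealM idealP Pxy xxyq).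
Qed.

Lemma sq_diff_sub_strongC P x y : strong_C_hyperideal hm P ->
  P (x - y) \/ P (x + y) -> hsub_set (sq_diff hm x y) P.
Proof.
move=> strongP Pxy; have idealP := hyperideal_of_strongC strongP.
have [a0 [d0 [xxa0 yyd0 Pad0]]] :
    exists a d, [/\ hm x x a, hm y y d & P (a - d)].
  case: Pxy => [|Pxy]; first exact: sq_diff_meet.
  rewrite -[y]opprK in Pxy.
  have [a [d [xxa /hmNN yyd Pad]]] := sq_diff_meet idealP Pxy.
  by exists a, d; rewrite !opprK in yyd.
move=> _ [a [d [xxa [yyd ->]]]].
by apply: (strongC_sum2 strongP xxa0 (hmNl yyd0)) => //; apply: hmNl.
Qed.

Lemma sq_diff_subP P x y :
  prime_hyperideal hm P -> strong_C_hyperideal hm P ->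
  hsub_set (sq_diff hm x y) P <-> P (x - y) \/ P (x + y).
Proof.
move=> primeP strongP; split; first exact: sq_diff_sub_prime.
exact: sq_diff_sub_strongC.
Qed.

Lemma quot_char2P (P : hset H) :
  Defs.proper P -> quot_char P 2%N <-> forall x, P (x + x).
Proof.
move=> [w Pw]; split; first by move=> [_ [Px2 _]] x; rewrite -mulr2n.
move=> Pxx; split=> //; split=> [x|]; first by rewrite mulr2n.
by case=> [|[|b]] // _ /(_ w).
Qed.

Lemma not_quot_char2 (P : hset H) :
  Defs.proper P -> ~ quot_char P 2%N -> exists a, ~ P (a + a).
Proof.
move=> properP nchar2; apply: NNPP => noa; apply/nchar2/quot_char2P => // x.
by apply: NNPP => nPx; apply: noa; exists x.
Qed.

Lemma char2_subD P x y : hyperideal hm P -> (forall z, P (z + z)) ->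
  P (x - y) <-> P (x + y).
Proof.
move=> idealP Pzz; split=> Pxy.
  by rewrite -[x + y](subrK (y + y)) addrKA; apply: (hyperidealD idealP).
by rewrite -(addrKA y x y); apply: (hyperidealB idealP).
Qed.

(* u o (a + a) ⊆ u o a + u o a meets P in al + al, so strongness puts it in P. *)
Lemma prime_hmul_double P u a al :
  prime_hyperideal hm P -> strong_C_hyperideal hm P ->
  hm u a al -> ~ P u -> ~ P (a + a) -> ~ P (al + al).
Proof.
move=> [_ [_ primeP]] strongP uaal nPu nPaa Palal.
suff : P u \/ P (a + a) by case.
apply: primeP => z /(hm_distr hmR) [p [q [uap [uaq ->]]]].
exact: (strongC_sum2 strongP uaal uaal Palal).
Qed.

Section Intersection.
Variables (n : nat) (P : 'I_n -> hset H).

Lemma hcap_hyperideal :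
  (forall i, hyperideal hm (P i)) -> hyperideal hm (hcap P).
Proof.
move=> idealP; split; first by exists 0 => i; apply: (hyperideal0 (idealP i)).
split=> [x y Px Py i|r x Px z rxz i]; first exact: (hyperidealB (idealP i)).
exact: (hyperidealM (idealP i) (Px i) rxz).
Qed.

Lemma hcap_proper i : Defs.proper (P i) -> Defs.proper (hcap P).
Proof. by case=> w nPw; exists w => /(_ i). Qed.

Lemma hcap_but_witness j : ~ hset_eq (hcap_but P j) (hcap P) ->
  exists u, hcap_but P j u /\ ~ P j u.
Proof.
move=> neqj; apply: NNPP => nou; apply: neqj => z; split=> [Pz k|Pz k _].
  case: (eqVneq k j) => [->|/Pz //].
  by apply: NNPP => nPz; apply: nou; exists z.
exact: Pz.
Qed.

Hypothesis primeP :
  forall i, prime_hyperideal hm (P i) /\ strong_C_hyperideal hm (P i).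
Hypothesis irredundant : forall j, ~ hset_eq (hcap_but P j) (hcap P).

Let idealP i : hyperideal hm (P i) := hyperideal_of_prime (primeP i).1.

Lemma hcap_sq_diff_subP x y :
  hsub_set (sq_diff hm x y) (hcap P) <->
  forall k, P k (x - y) \/ P k (x + y).
Proof.
split=> [sqP k|Pxy z sqz k].
  by apply/(sq_diff_subP _ _ (primeP k).1 (primeP k).2) => z /sqP.
by apply: (sq_diff_sub_strongC (primeP k).2 (Pxy k)).
Qed.

Lemma exists_hcap_but_double i : ~ quot_char (P i) 2%N ->
  exists al, hcap_but P i al /\ ~ P i (al + al).
Proof.
move=> nchar2; have [u [Pu nPu]] := hcap_but_witness (@irredundant i).
have [a nPaa] := not_quot_char2 (primeP i).1.2.1 nchar2.
have [al uaal] := hm_nonempty hmR u a.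
exists al; split.
  by move=> k ki; apply: (hyperidealMl (idealP k) (Pu k ki) uaal).
exact: prime_hmul_double (primeP i).1 (primeP i).2 uaal nPu nPaa.
Qed.

Lemma sdf_absorbing_hcap_char2 : sdf_absorbing hm (hcap P) ->
  forall i j, ~ quot_char (P i) 2%N -> ~ quot_char (P j) 2%N -> i = j.
Proof.
move=> [_ [_ sdfP]] i j nchar2i nchar2j; case: (eqVneq i j) => // neqij.
have [al [Pal nPal]] := exists_hcap_but_double nchar2i.
have [be [Pbe nPbe]] := exists_hcap_but_double nchar2j.
have Pibe : P i (be + be) by apply: (hyperidealD (idealP i)); apply: Pbe.
have subE : al + be - (al - be) = be + be by rewrite opprB addrC addrA subrK.
have addE : al + be + (al - be) = al + al by rewrite addrACA subrr addr0.
have := sdfP (al + be) (al - be); rewrite subE addE.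
case=> [x0 | y0 | | /(_ j) // | /(_ i) //].
- apply: nPal; have -> : al = - be by apply/eqP; rewrite -addr_eq0 x0.
  by rewrite -opprD; apply: (hyperidealN (idealP i)).
- by apply: nPal; have -> : al = be by apply/eqP; rewrite -subr_eq0 y0.
- apply/hcap_sq_diff_subP => k; rewrite subE addE.
  case: (eqVneq k i) => [-> | /Pal Pkal]; [left | right] => //.
  exact: (hyperidealD (idealP k)).
Qed.

Lemma char2_hcap_sdf_absorbing : (0 < n)%N ->
  (forall i j, ~ quot_char (P i) 2%N -> ~ quot_char (P j) 2%N -> i = j) ->
  sdf_absorbing hm (hcap P).
Proof.
move=> n_gt0 atmost1; split; first exact: hcap_hyperideal.
split; first exact: (hcap_proper (i := Ordinal n_gt0)) (primeP _).1.2.1.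
move=> x y _ _ /hcap_sq_diff_subP Pxy.
have char2 k : ~ ~ quot_char (P k) 2%N -> forall z, P k (z + z).
  by move=> /NNPP /(quot_char2P (primeP k).1.2.1).
have [k0 char2_off] : exists k0, forall k, k != k0 -> forall z, P k (z + z).
  case: (classic (exists k0, ~ quot_char (P k0) 2%N)) => [[k0 nchar2] | all2].
    by exists k0 => k /eqP nk; apply: char2 => /atmost1 /(_ nchar2).
  exists (Ordinal n_gt0) => k _; apply: char2 => nchar2.
  by apply: all2; exists k.
case: (Pxy k0) => Pk0; [left | right] => k; case: (eqVneq k k0) => [-> //|nk];
  have := Pxy k; rewrite (char2_subD x y (idealP k) (char2_off k nk)); tauto.
Qed.

End Intersection.
End Hyperring.

Theorem mainTheorem8 (H : zmodType) (hm : hyperop H) (e : H) (n : nat)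
    (P : 'I_n -> hset H) :
  cm_hyperring hm -> hm_identity hm e -> (0 < n)%N ->
  (forall i, prime_hyperideal hm (P i) /\ strong_C_hyperideal hm (P i)) ->
  (forall j, ~ hset_eq (hcap_but P j) (hcap P)) ->
  (sdf_absorbing hm (hcap P) <->
   (forall i j : 'I_n, ~ quot_char (P i) 2 -> ~ quot_char (P j) 2 -> i = j)).
Proof.
move=> hmR _ n_gt0 primeP irredundant; split.
  exact: sdf_absorbing_hcap_char2.
exact: char2_hcap_sdf_absorbing.
Qed.
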